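(* Let the setting and notation be as in the context. Assume the velocity field $\boldsymbol{v}(\boldsymbol{x},t)=\mathbb{E}[\alpha_t'\boldsymbol{x}_0+\sigma_t'\boldsymbol{z}\mid \boldsymbol{x}_t=\boldsymbol{x}]$ is $L$-Lipschitz in its first argument: $\|\boldsymbol{v}(\boldsymbol{x}_1,t)-\boldsymbol{v}(\boldsymbol{x}_2,t)\|_2\le L\|\boldsymbol{x}_1-\boldsymbol{x}_2\|_2$ for all $\boldsymbol{x}_1,\boldsymbol{x}_2\in\mathbb{R}^n$, $t\in[0,1]$. Consider the SDEI loss $$\mathcal{L}_{\mathrm{SDEI}}(\theta)=\mathbb{E}_{\boldsymbol{x}_0,\boldsymbol{z},t,s,\,r\sim\mathcal{U}(t,s)}\big\|\boldsymbol{f}_\theta(\boldsymbol{x}_t,t,s)-\boldsymbol{v}\big(\boldsymbol{x}_t+(r-t)\boldsymbol{f}_{\theta^-}(\boldsymbol{x}_t,t,r),\,r\big)\big\|_2^2 .$$ Then for each fixed $t$ there is $h>0$ such that the following holds: if $\boldsymbol{f}_\theta$ attains the minimum of $\mathcal{L}_{\mathrm{SDEI}}$ (in the stop-gradient sense: with $\theta^-=\theta$ held fixed in the target, $\boldsymbol{f}_\theta$ minimizes the loss over all functions of $(\boldsymbol{x}_t,t,s)$), then $\boldsymbol{f}_\theta(\boldsymbol{x}_t,t,s)=\boldsymbol{f}(\boldsymbol{x}_t,t,s)$ for all $s$ with $|s-t|\le h$, where $\boldsymbol{f}$ is the secant function.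
   Context: Let $p_d$ be a data distribution on $\mathbb{R}^n$, $\boldsymbol{x}_0\sim p_d$, $\boldsymbol{z}\sim\mathcal{N}(\boldsymbol{0},\boldsymbol{I})$ independent, and let $\alpha_t,\sigma_t$ be differentiable functions on $[0,1]$ with derivatives $\alpha_t',\sigma_t'$. Set $\boldsymbol{x}_t=\alpha_t\boldsymbol{x}_0+\sigma_t\boldsymbol{z}$. The velocity field is $\boldsymbol{v}(\boldsymbol{x}_t,t)=\mathbb{E}[\alpha_t'\boldsymbol{x}_0+\sigma_t'\boldsymbol{z}\mid\boldsymbol{x}_t]$, and the probability-flow ODE is $\frac{d\boldsymbol{x}_t}{dt}=\boldsymbol{v}(\boldsymbol{x}_t,t)$; for a point $\boldsymbol{x}_t$ at time $t$, $\boldsymbol{x}_r$ denotes the solution of this ODE at time $r$ passing through $\boldsymbol{x}_t$ at time $t$. The secant function is $\boldsymbol{f}(\boldsymbol{x}_t,t,s)=\boldsymbol{v}(\boldsymbol{x}_t,t)$ if $s=t$ and $\boldsymbol{f}(\boldsymbol{x}_t,t,s)=\frac{1}{s-t}\int_t^s\boldsymbol{v}(\boldsymbol{x}_r,r)\,dr$ if $s\neq t$. $\boldsymbol{f}_\theta(\boldsymbol{x},t,s)$ is a parametrized function (neural network) $\mathbb{R}^n\times[0,1]\times[0,1]\to\mathbb{R}^n$; $\theta^-$ denotes a stop-gradient copy of $\theta$ (same value, not differentiated). $r\sim\mathcal{U}(t,s)$ means $r$ uniform on $[\min\{t,s\},\max\{t,s\}]$, independent of $\boldsymbol{x}_0,\boldsymbol{z}$;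 $t,s$ are sampled independently of $\boldsymbol{x}_0,\boldsymbol{z}$. *)

From HB Require Import structures.
From mathcomp Require Import all_boot all_order all_algebra.
From mathcomp Require Import all_classical all_reals all_analysis.
Set Implicit Arguments. Unset Strict Implicit. Unset Printing Implicit Defensive.
Import Order.TTheory GRing.Theory Num.Theory.
Import numFieldNormedType.Exports.
Local Open Scope classical_set_scope.
Local Open Scope ring_scope.

Section Defs.
Variables (R : realType) (n : nat).

Definition sqnorm2 (x : 'rV[R]_n) : R := \sum_(i < n) (x ord0 i) ^+ 2.
Definition norm2 (x : 'rV[R]_n) : R := Num.sqrt (sqnorm2 x).

Definition vint (g : R -> 'rV[R]_n) (a b : R) : 'rV[R]_n :=
  \row_(i < n) (if a <= b
                then Rintegral (@lebesgue_measure R) `[a, b] (fun r => g r ord0 i)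
                else - Rintegral (@lebesgue_measure R) `[b, a] (fun r => g r ord0 i)).

(** secant function f(x_t,t,s); [flow x t r] is x_r, the solution of the
    PF-ODE at time r passing through x at time t *)
Definition secant (v : 'rV[R]_n -> R -> 'rV[R]_n)
  (flow : 'rV[R]_n -> R -> R -> 'rV[R]_n) (x : 'rV[R]_n) (t s : R) : 'rV[R]_n :=
  if s == t then v x t
  else (s - t)^-1 *: vint (fun r => v (flow x t r) r) t s.

(** E_{r ~ U(t,s)} [g r] (extended-real valued, g >= 0 intended);
    U(t,t) is the point mass at t *)
Definition unif_mean (t s : R) (g : R -> R) : \bar R :=
  if s == t then (g t)%:E
  else (((`|s - t|)^-1)%:E *
       \int[@lebesgue_measure R]_(r in `[Num.min t s, Num.max t s]) (g r)%:E)%E.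

(** conditional SDEI risk at (x_t,t,s) of the prediction c, with the target
    built from the stop-gradient copy f_{theta^-} *)
Definition sdei_risk (v : 'rV[R]_n -> R -> 'rV[R]_n)
  (fminus : 'rV[R]_n -> R -> R -> 'rV[R]_n) (x : 'rV[R]_n) (t s : R)
  (c : 'rV[R]_n) : \bar R :=
  unif_mean t s (fun r => sqnorm2 (c - v (x + (r - t) *: fminus x t r) r)).

End Defs.

From HB Require Import structures.
From mathcomp Require Import all_boot all_order all_algebra.
From mathcomp Require Import all_classical all_reals all_analysis.
From mathcomp Require Import ring lra.
Import Order.TTheory GRing.Theory Num.Theory.
Import numFieldNormedType.Exports.
Local Open Scope classical_set_scope.
Local Open Scope ring_scope.

(* For fixed [x], [t], [s], the SDEI risk of a prediction [c] is the mean of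
   [|c - g r|^2] over [r ~ U(t, s)], with [g r := v (x + (r - t) f(x, t, r), r)];
   by the bias-variance decomposition its minimizer is the mean of [g] over
   [U(t, s)].  Hence [y r := x + (r - t) f(x, t, r)] solves the integral equation
   [y r = x + \int_t^r v (y u, u) du], as the flow [r |-> x_r] does by the
   fundamental theorem of calculus.  As [v] is [L]-Lipschitz, the supremum of
   [|y r - x_r|^2] over [|r - t| <= h] is at most [(h L)^2] times itself, so for
   [h = 1 / (|L| + 1)] the two solutions agree, and [f(x, t, s)] is the mean of
   [v] along the flow, that is the secant. *)

Local Notation seg a b := (`[Num.min a b, Num.max a b]%classic).

Section EuclideanNorm.
Context {R : realType} {n : nat}.
Implicit Types z : 'rV[R]_n.

Lemma sqnorm2_ge0 z : 0 <= sqnorm2 z.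
Proof. by apply: sumr_ge0 => i _; exact: sqr_ge0. Qed.

Lemma sqnorm20 : sqnorm2 (0 : 'rV[R]_n) = 0.
Proof. by rewrite /sqnorm2 big1 // => i _; rewrite mxE expr0n. Qed.

Lemma sqnorm2N z : sqnorm2 (- z) = sqnorm2 z.
Proof. by apply: eq_bigr => i _; rewrite mxE sqrrN. Qed.

Lemma sqnorm2_le0 z : (sqnorm2 z <= 0) = (z == 0).
Proof.
apply/idP/eqP => [|->]; last by rewrite sqnorm20.
rewrite le_eqVlt ltNge sqnorm2_ge0 orbF /sqnorm2 psumr_eq0 => [/allP z0|i _]; last exact: sqr_ge0.
by apply/rowP => i; rewrite mxE; apply/eqP; rewrite -sqrf_eq0; exact: z0 (mem_index_enum _).
Qed.

Lemma norm2_ge0 z : 0 <= norm2 z.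
Proof. exact: sqrtr_ge0. Qed.

Lemma sqr_norm2 z : norm2 z ^+ 2 = sqnorm2 z.
Proof. by rewrite sqr_sqrtr // sqnorm2_ge0. Qed.

Lemma mx_norm_le_norm2 z : `|z| <= norm2 z.
Proof.
rewrite [X in X <= _]mx_normrE; apply: bigmax_le => [|[i j] _ /=]; first exact: norm2_ge0.
rewrite (ord1 i) -(ler_pXn2r (n := 2)) ?nnegrE ?norm2_ge0 // sqr_norm2 real_normK ?num_real //.
by rewrite /sqnorm2 (bigD1 j) //= lerDl sumr_ge0 // => k _; exact: sqr_ge0.
Qed.

Lemma norm2_le_mx_norm z : norm2 z <= n.+1%:R * `|z|.
Proof.
rewrite -(ler_pXn2r (n := 2)) ?nnegrE ?norm2_ge0 ?mulr_ge0 // sqr_norm2.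
apply: (@le_trans _ _ (\sum_(i < n) `|z| ^+ 2)).
  apply: ler_sum => i _; rewrite -real_normK ?num_real // ler_pXn2r ?nnegrE //.
  by rewrite [X in _ <= X]mx_normrE (le_bigmax _ _ (ord0, i)).
rewrite sumr_const card_ord -[_ *+ n]mulr_natl exprMn ler_wpM2r ?sqr_ge0 //.
by rewrite -natrX ler_nat (leq_trans (leqnSn n)) // leq_pmulr.
Qed.

Lemma sqnorm2_continuous : continuous (@sqnorm2 R n).
Proof.
move=> z; apply: cvg_big => [||i _]; [exact: add_continuous|exact: nbhs_filter|].
have zi : {for z, continuous (fun x : 'rV[R]_n => x ord0 i)} := @coord_continuous R 1 n ord0 i z.
by rewrite expr2; exact: (cvgM zi zi).
Qed.

End EuclideanNorm.

Section WithinContinuity.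
Context {T : topologicalType} {R : realType} {A : set T}.

Lemma within_coord {n : nat} [g : T -> 'rV[R]_n] (i : 'I_n) :
  {within A, continuous g} -> {within A, continuous (fun r => g r ord0 i)}.
Proof.
move=> cg; apply: (within_continuous_comp _ _ (fun M : 'rV[R]_n => M ord0 i) _ cg) => M _.
exact: coord_continuous.
Qed.

Lemma within_sqr [f : T -> R] :
  {within A, continuous f} -> {within A, continuous (fun r => f r ^+ 2)}.
Proof. by move=> cf x; exact: (cvgM (cf x) (cf x)). Qed.

Lemma within_continuousB {V : normedModType R} [f g : T -> V] :
  {within A, continuous f} -> {within A, continuous g} ->
  {within A, continuous (fun x => f x - g x)}.
Proof. by move=> cf cg x; apply: cvgB; [exact: cf|exact: cg]. Qed.

Lemma within_sqnorm2 {n : nat} [g : T -> 'rV[R]_n] :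
  {within A, continuous g} -> {within A, continuous (fun x => sqnorm2 (g x))}.
Proof.
move=> cg; apply: (within_continuous_comp _ _ (@sqnorm2 R n) _ cg) => y _.
exact: sqnorm2_continuous.
Qed.

End WithinContinuity.

Section Segment.
Context {R : realType}.
Implicit Types a b : R.

Lemma mem_seg_l a b : a \in seg a b.
Proof. by rewrite inE /= in_itv /= ge_min le_max lexx. Qed.

Lemma segC a b : seg b a = seg a b.
Proof. by rewrite minC maxC. Qed.

Lemma seg_len a b : Num.max a b - Num.min a b = `|b - a|.
Proof.
case: (leP a b) => ab; first by rewrite ger0_norm // subr_ge0.
by rewrite ltr0_norm ?opprB // subr_lt0.
Qed.

Lemma seg_dist [a b u : R] : seg a b u -> `|u - a| <= `|b - a|.
Proof.
rewrite /= in_itv /=; case: (leP a b) => ab.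
  by move=> /andP[au ub]; rewrite !ger0_norm ?subr_ge0 ?lerB.
move=> /andP[bu ua].
by rewrite !ler0_norm ?subr_le0 ?(ltW ab) // lerN2 lerB.
Qed.

Lemma seg_sub [c d a b : R] : a \in `[c, d] -> b \in `[c, d] -> seg a b `<=` `[c, d].
Proof.
rewrite !in_itv /= => /andP[ca ad] /andP[cb bd] u; rewrite /= !in_itv /= => /andP[mu uM].
by rewrite (le_trans _ mu) ?le_min ?ca ?cb // (le_trans uM) // ge_max ad bd.
Qed.

Lemma oseg_sub [c d a b u : R] : a \in `[c, d] -> b \in `[c, d] ->
  u \in `]Num.min a b, Num.max a b[ -> u \in `]c, d[.
Proof.
rewrite !in_itv /= => /andP[ca ad] /andP[cb bd] /andP[mu uM].
by rewrite (le_lt_trans _ mu) ?le_min ?ca ?cb // (lt_le_trans uM) // ge_max ad bd.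
Qed.

End Segment.

Lemma integral_EFin_Rintegral d (T : measurableType d) (R : realType) (mu : measure T R)
    (D : set T) (f : T -> R) :
  measurable D -> mu.-integrable D (EFin \o f) ->
  (\int[mu]_(x in D) (f x)%:E)%E = (\int[mu]_(x in D) f x)%:E.
Proof. by move=> mD fi; rewrite /Rintegral fineK // integrable_fin_num. Qed.

Lemma Rintegral_sum d (T : measurableType d) (R : realType) (mu : measure T R) (D : set T)
    (I : Type) (s : seq I) (f : I -> T -> R) :
  measurable D -> (forall k, mu.-integrable D (EFin \o f k)) ->
  \int[mu]_(x in D) (\sum_(k <- s) f k x) = \sum_(k <- s) \int[mu]_(x in D) f k x.
Proof.
move=> mD fi; elim: s => [|k s IHs].
  by under eq_Rintegral do rewrite big_nil; rewrite big_nil Rintegral_cst // mul0r.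
under eq_Rintegral do rewrite big_cons.
rewrite big_cons RintegralD ?IHs //.
have -> : EFin \o (fun x => \sum_(j <- s) f j x) = (fun x => \sum_(j <- s) (EFin \o f j) x)%E.
  by apply: funext => x /=; rewrite sumEFin.
exact: integrable_sum.
Qed.

Section SegmentIntegral.
Context {R : realType} {a b : R}.
Local Notation mu := (@lebesgue_measure R).

Lemma integrable_segment (f : R -> R) :
  {within `[a, b], continuous f} -> mu.-integrable `[a, b] (EFin \o f).
Proof. by apply: continuous_compact_integrable; exact: segment_compact. Qed.

Lemma Rintegral_segment_cst (c : R) : a <= b -> \int[mu]_(x in `[a, b]) c = c * (b - a).
Proof.
move=> ab; rewrite Rintegral_cst //; congr (_ * _).
have mu_ab : fine (mu `[a, b]) = b - a.
  by rewrite lebesgue_measure_itv /= lte_fin; case: ltgtP ab => // ->; rewrite subrr.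
exact: mu_ab.
Qed.

Lemma Rintegral_segment_sqr_dev (d : R -> R) (m c : R) : a <= b ->
  {within `[a, b], continuous d} -> \int[mu]_(x in `[a, b]) d x = (b - a) * m ->
  \int[mu]_(x in `[a, b]) (c - d x) ^+ 2 =
  \int[mu]_(x in `[a, b]) (m - d x) ^+ 2 + (b - a) * (c - m) ^+ 2.
Proof.
move=> ab cd dm.
have sqr_cont (e : R) : {within `[a, b], continuous (fun x => (e - d x) ^+ 2)}.
  by apply/within_sqr/within_continuousB => // x; exact: cvg_cst.
apply/eqP; rewrite addrC -subr_eq -RintegralB; try exact: integrable_segment.
(* the squares of [d] cancel *)
have -> : \int[mu]_(x in `[a, b]) ((c - d x) ^+ 2 - (m - d x) ^+ 2) =
          \int[mu]_(x in `[a, b]) (c ^+ 2 - m ^+ 2 + - 2 * (c - m) * d x).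
  by apply: eq_Rintegral => x _; ring.
rewrite RintegralD ?RintegralZl ?(Rintegral_segment_cst _ ab) ?dm //; try exact: integrable_segment.
- by apply/eqP; ring.
- by apply: integrable_segment => x; exact: cvg_cst.
- by apply: integrable_segment => x; apply: cvgM; [exact: cvg_cst|exact: cd].
- exact: measurable_itv.
Qed.

Lemma Rintegral_segment_sqr_le (d : R -> R) : a < b -> {within `[a, b], continuous d} ->
  (\int[mu]_(x in `[a, b]) d x) ^+ 2 <= (b - a) * \int[mu]_(x in `[a, b]) d x ^+ 2.
Proof.
move=> ab cd; set m := (b - a)^-1 * \int[mu]_(x in `[a, b]) d x.
have dm : \int[mu]_(x in `[a, b]) d x = (b - a) * m.
  by rewrite /m mulrA mulfV ?mul1r // subr_eq0 gt_eqF.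
have := Rintegral_segment_sqr_dev _ _ 0 (ltW ab) cd dm.
under eq_Rintegral do rewrite sub0r sqrrN.
move=> ->; rewrite dm sub0r sqrrN exprMn mulrDr mulrA -expr2 lerDr.
by rewrite mulr_ge0 ?subr_ge0 ?(ltW ab) // Rintegral_ge0 // => x _; exact: sqr_ge0.
Qed.

Lemma Rintegral_is_derive [f F : R -> R] : a < b ->
  {within `[a, b], continuous f} -> {within `[a, b], continuous F} ->
  (forall r, r \in `]a, b[ -> is_derive r 1 F (f r)) ->
  \int[mu]_(x in `[a, b]) f x = F b - F a.
Proof.
move=> ab cf cF dF; have [_ Fa Fb] := (continuous_within_itvP _ ab).1 cF.
have F'f : {in `]a, b[, F^`()%classic =1 f}.
  by move=> r /dF Fr; rewrite derive1E (@derive_val _ _ _ _ _ _ _ Fr).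
have Fd : derivable_oo_LRcontinuous F a b.
  by split => // r /dF Fr; exact: (@ex_derive _ _ _ _ _ _ _ Fr).
by rewrite /Rintegral (continuous_FTC2 ab cf Fd F'f).
Qed.

End SegmentIntegral.

Section VectorIntegral.
Context {R : realType} {n : nat}.
Local Notation mu := (@lebesgue_measure R).
Implicit Types (g w F : R -> 'rV[R]_n) (a b : R).

Lemma vint_le [g] [a b] : a <= b -> vint g a b = \row_i \int[mu]_(x in `[a, b]) g x ord0 i.
Proof. by move=> ab; apply/rowP => i; rewrite !mxE ab. Qed.

Lemma vint_gt [g] [a b] : b < a -> vint g a b = - \row_i \int[mu]_(x in `[b, a]) g x ord0 i.
Proof. by move=> ba; apply/rowP => i; rewrite !mxE leNgt ba. Qed.

Lemma vint_id g a : vint g a a = 0.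
Proof. by rewrite vint_le //; apply/rowP => i; rewrite !mxE set_itv1 Rintegral_set1. Qed.

Lemma vintN g a b : vint g b a = - vint g a b.
Proof.
case: (ltgtP a b) => [ab|ba|->]; last by rewrite vint_id oppr0.
- by rewrite (vint_gt ab) (vint_le (ltW ab)).
- by rewrite (vint_le (ltW ba)) (vint_gt ba) opprK.
Qed.

Lemma eq_vint [g w] [a b] : {in seg a b, g =1 w} -> vint g a b = vint w a b.
Proof.
move=> gw; apply/rowP => i; rewrite !mxE.
by case: (leP a b) gw => ab gw /=; [|congr -%R]; apply: eq_Rintegral => x /gw ->.
Qed.

Lemma vintB g w a b : {within seg a b, continuous g} -> {within seg a b, continuous w} ->
  vint (fun x => g x - w x) a b = vint g a b - vint w a b.
Proof.
wlog ab : a b / a <= b.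
  move=> H; case/orP: (le_total a b) => [/H //|ba]; rewrite -segC => cg cw.
  by rewrite !(vintN _ b a) H // opprD.
rewrite (min_l ab) (max_r ab) => cg cw; rewrite !(vint_le ab); apply/rowP => i; rewrite !mxE.
under eq_Rintegral do rewrite !mxE.
by rewrite RintegralB //; apply: integrable_segment; exact: within_coord.
Qed.

Lemma Rintegral_sqnorm2 g a b : {within `[a, b], continuous g} ->
  \int[mu]_(x in `[a, b]) sqnorm2 (g x) = \sum_(i < n) \int[mu]_(x in `[a, b]) g x ord0 i ^+ 2.
Proof.
move=> cg; rewrite Rintegral_sum // => i.
by apply: integrable_segment; apply: within_sqr; exact: within_coord.
Qed.

Lemma sqnorm2_vint g a b :
  sqnorm2 (vint g a b) = \sum_(i < n) (\int[mu]_(x in seg a b) g x ord0 i) ^+ 2.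
Proof.
wlog ab : a b / a <= b.
  by move=> H; case/orP: (le_total a b) => [/H //|/H]; rewrite vintN sqnorm2N segC.
by rewrite (vint_le ab) (min_l ab) (max_r ab); apply: eq_bigr => i _; rewrite mxE.
Qed.

Lemma sqnorm2_vint_le g a b C : {within seg a b, continuous g} ->
  (forall r, seg a b r -> sqnorm2 (g r) <= C) -> sqnorm2 (vint g a b) <= (b - a) ^+ 2 * C.
Proof.
wlog ab : a b / a < b.
  move=> H cg gC; case: (ltgtP a b) => [ab|ba|<-]; first exact: H.
    by rewrite vintN sqnorm2N -sqrrN opprB; apply: H; rewrite // segC.
  by rewrite vint_id sqnorm20 subrr expr0n mul0r.
move=> cg gC; rewrite sqnorm2_vint (min_l (ltW ab)) (max_r (ltW ab)) in cg gC *.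
apply: (@le_trans _ _ (\sum_(i < n) (b - a) * \int[mu]_(x in `[a, b]) g x ord0 i ^+ 2)).
  by apply: ler_sum => i _; apply: Rintegral_segment_sqr_le ab _; exact: within_coord.
rewrite -mulr_sumr -Rintegral_sqnorm2 // expr2 -mulrA ler_pM2l ?subr_gt0 //.
rewrite mulrC -Rintegral_segment_cst ?(ltW ab) //; apply: le_Rintegral => //.
- exact/integrable_segment/within_sqnorm2.
- by apply: integrable_segment => x; exact: cvg_cst.
Qed.

Lemma is_derive_coord F (r : R) (dF : 'rV[R]_n) i :
  is_derive r 1 F dF -> is_derive r 1 (fun x => F x ord0 i) (dF ord0 i).
Proof.
move=> FdF; have Fd : derivable F r 1 := @ex_derive _ _ _ _ _ _ _ FdF.
apply: DeriveDef; first exact: ((derivable_mxP F r 1).1 Fd ord0 i).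
have := derive_mx Fd; rewrite (@derive_val _ _ _ _ _ _ _ FdF).
by move=> /(congr1 (fun M : 'rV[R]_n => M ord0 i)); rewrite mxE => ->.
Qed.

Lemma vint_derive [F g] [a b] : {within seg a b, continuous F} -> {within seg a b, continuous g} ->
  (forall r, r \in `]Num.min a b, Num.max a b[ -> is_derive r 1 F (g r)) ->
  vint g a b = F b - F a.
Proof.
wlog ab : a b / a <= b.
  move=> H; case/orP: (le_total a b) => [/H //|/H].
  rewrite segC [Num.min b a]minC [Num.max b a]maxC => Hba cF cg dF.
  by rewrite vintN Hba // opprB.
rewrite (min_l ab) (max_r ab) => cF cg dF.
case: (eqVneq a b) => [<-|a_neq_b]; first by rewrite vint_id subrr.
have {}ab : a < b by rewrite lt_neqAle a_neq_b.
rewrite (vint_le (ltW ab)); apply/matrixP => k i; rewrite (ord1 k) !mxE.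
apply: (Rintegral_is_derive ab (within_coord i cg) (within_coord i cF)).
by move=> r /dF; exact: is_derive_coord.
Qed.

Lemma vint_derive_itv [F g] [c d t r : R] :
  {within `[c, d], continuous F} -> {within `[c, d], continuous g} ->
  (forall u, u \in `]c, d[ -> is_derive u 1 F (g u)) ->
  t \in `[c, d] -> r \in `[c, d] -> F r = F t + vint g t r.
Proof.
move=> cF cg dF tcd rcd; have tr_cd := seg_sub tcd rcd.
have dF_tr u (u_tr : u \in `]Num.min t r, Num.max t r[) := dF u (oseg_sub tcd rcd u_tr).
rewrite (vint_derive (continuous_subspaceW tr_cd cF) (continuous_subspaceW tr_cd cg) dF_tr).
by rewrite addrC subrK.
Qed.

End VectorIntegral.

Section LipschitzComposition.
Context {R : realType} {n : nat}.
Context {v : 'rV[R]_n -> R -> 'rV[R]_n} {L : R} {i : interval R}.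
Hypothesis v_lip : forall x1 x2 t, t \in i -> norm2 (v x1 t - v x2 t) <= L * norm2 (x1 - x2).
Hypothesis v_cont : forall x, {within [set` i], continuous (v x)}.

Lemma sqnorm2_lip x1 x2 t : t \in i ->
  sqnorm2 (v x1 t - v x2 t) <= L ^+ 2 * sqnorm2 (x1 - x2).
Proof.
move=> ti; have lip := v_lip x1 x2 t ti.
rewrite -!sqr_norm2 -exprMn ler_pXn2r // nnegrE ?norm2_ge0 //.
exact: le_trans (norm2_ge0 _) lip.
Qed.

Lemma continuous_within_lipschitz_comp [p : R -> 'rV[R]_n] :
  {within [set` i], continuous p} -> {within [set` i], continuous (fun r => v (p r) r)}.
Proof.
move=> cp; apply/subspace_continuousP => r0 r0i.
have /subspace_continuousP /(_ r0 r0i) /cvgrPdist_lt p_cvg := cp.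
have /subspace_continuousP /(_ r0 r0i) /cvgrPdist_lt v_cvg := v_cont (p r0).
apply/cvgrPdist_lt => e e0.
set k := (`|L| + 1) * n.+1%:R.
have k0 : 0 < k by rewrite mulr_gt0 // ltr_wpDl.
have e20 : 0 < e / 2 by rewrite divr_gt0.
near=> r.
have ri : r \in i by near: r; exact: near_withinT.
have pr : `|p r0 - p r| < e / 2 / k by near: r; exact: p_cvg (divr_gt0 e20 k0).
rewrite -(subrKA (v (p r0) r)) (le_lt_trans (ler_normD _ _)) // (splitr e) ltr_leD //.
  by near: r; exact: v_cvg.
apply: le_trans (mx_norm_le_norm2 _) _; apply: le_trans (v_lip _ _ _ ri) _.
apply: (@le_trans _ _ ((`|L| + 1) * norm2 (p r0 - p r))).
  by rewrite ler_wpM2r ?norm2_ge0 // (le_trans (ler_norm L)) // lerDl.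
apply: (@le_trans _ _ (k * `|p r0 - p r|)).
  by rewrite /k -mulrA ler_wpM2l ?norm2_le_mx_norm // ltW.
by rewrite mulrC -ler_pdivlMr // ltW.
Unshelve. all: by end_near.
Qed.

Lemma sqnorm2_vint_lip_le [y1 y2 : R -> 'rV[R]_n] [a b M : R] : seg a b `<=` [set` i] ->
  {within [set` i], continuous y1} -> {within [set` i], continuous y2} ->
  (forall u, seg a b u -> sqnorm2 (y1 u - y2 u) <= M) ->
  sqnorm2 (vint (fun u => v (y1 u) u) a b - vint (fun u => v (y2 u) u) a b) <=
    (b - a) ^+ 2 * (L ^+ 2 * M).
Proof.
move=> ab_i cy1 cy2 yM.
have vy_cont y : {within [set` i], continuous y} ->
    {within seg a b, continuous (fun u => v (y u) u)}.
  by move=> cy; apply: continuous_subspaceW ab_i _; exact: continuous_within_lipschitz_comp.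
rewrite -vintB; try exact: vy_cont.
apply: sqnorm2_vint_le => [|u abu]; first by apply: within_continuousB; exact: vy_cont.
apply: le_trans (sqnorm2_lip _ _ _ (ab_i u abu)) _.
by apply: ler_wpM2l; [exact: sqr_ge0|exact: yM].
Qed.

End LipschitzComposition.

Section UniformMean.
Context {R : realType} {n : nat}.
Local Notation mu := (@lebesgue_measure R).
Implicit Types (g w : R -> 'rV[R]_n) (a b : R).

Definition vmean g a b : 'rV[R]_n := if b == a then g a else (b - a)^-1 *: vint g a b.

Lemma scale_vmean g a b : (b - a) *: vmean g a b = vint g a b.
Proof.
rewrite /vmean; case: eqVneq => [->|ba]; first by rewrite subrr scale0r vint_id.
by rewrite scalerA mulfV ?scale1r // subr_eq0.
Qed.

Lemma eq_vmean g w a b : {in seg a b, g =1 w} -> vmean g a b = vmean w a b.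
Proof. by move=> gw; rewrite /vmean (eq_vint gw) gw // mem_seg_l. Qed.

Lemma Rintegral_seg_vmean g a b i : a != b ->
  \int[mu]_(x in seg a b) g x ord0 i = `|b - a| * vmean g a b ord0 i.
Proof.
move=> a_neq_b; rewrite /vmean eq_sym (negbTE a_neq_b) !mxE.
case: (ltgtP a b) a_neq_b => // [ab|ba] _.
- by rewrite gtr0_norm ?subr_gt0 //; field; rewrite subr_eq0 gt_eqF.
- by rewrite ltr0_norm ?subr_lt0 //; field; rewrite subr_eq0 lt_eqF.
Qed.

Lemma unif_meanE [q : R -> R] [a b : R] : a != b -> {within seg a b, continuous q} ->
  unif_mean a b q = (`|b - a|^-1 * \int[mu]_(x in seg a b) q x)%:E.
Proof.
move=> ab cq; rewrite /unif_mean eq_sym (negbTE ab) integral_EFin_Rintegral //.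
exact: integrable_segment.
Qed.

Lemma unif_mean_fin_num (q : R -> R) a b :
  {within seg a b, continuous q} -> unif_mean a b q \is a fin_num.
Proof.
move=> cq; have [<-|ab] := eqVneq a b; first by rewrite /unif_mean eqxx.
by rewrite (unif_meanE ab cq).
Qed.

Lemma unif_mean_sqnorm2 g a b c : {within seg a b, continuous g} ->
  unif_mean a b (fun r => sqnorm2 (c - g r)) =
  ((sqnorm2 (c - vmean g a b))%:E + unif_mean a b (fun r => sqnorm2 (vmean g a b - g r)))%E.
Proof.
move=> cg; have [<-|ab] := eqVneq a b.
  by rewrite /unif_mean /vmean eqxx subrr sqnorm20 adde0.
have dev_cont (e : 'rV[R]_n) : {within seg a b, continuous (fun x => e - g x)}.
  by apply: within_continuousB cg => x; exact: cvg_cst.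
rewrite !(unif_meanE ab) -?EFinD; try exact/within_sqnorm2/dev_cont.
congr EFin; set m := vmean g a b.
have -> : \int[mu]_(x in seg a b) sqnorm2 (c - g x) =
          \int[mu]_(x in seg a b) sqnorm2 (m - g x) + `|b - a| * sqnorm2 (c - m).
  rewrite !Rintegral_sqnorm2 // /sqnorm2 -seg_len mulr_sumr -big_split; apply: eq_bigr => i _ /=.
  rewrite !mxE; under eq_Rintegral do rewrite !mxE.
  under [X in _ = X + _]eq_Rintegral do rewrite !mxE.
  apply: Rintegral_segment_sqr_dev; first by rewrite -subr_ge0 seg_len.
    exact: within_coord.
  by rewrite seg_len Rintegral_seg_vmean.
have ba0 : `|b - a| != 0 by rewrite normr_eq0 subr_eq0 eq_sym.
by field.
Qed.

Lemma argmin_unif_mean g a b c0 : {within seg a b, continuous g} ->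
  (forall c, (unif_mean a b (fun r => sqnorm2 (c0 - g r)) <=
              unif_mean a b (fun r => sqnorm2 (c - g r)))%E) ->
  c0 = vmean g a b.
Proof.
move=> cg /(_ (vmean g a b)); rewrite unif_mean_sqnorm2 //.
set K := unif_mean a b _; have Kfin : K \is a fin_num.
  by apply/unif_mean_fin_num/within_sqnorm2/within_continuousB => // x; exact: cvg_cst.
by rewrite -[leRHS]add0e leeD2rE // lee_fin sqnorm2_le0 subr_eq0 => /eqP.
Qed.

End UniformMean.

Lemma le0_contraction {R : realType} [A : set R] [k : R] :
  A !=set0 -> has_ubound A -> k < 1 ->
  (forall M, ubound A M -> forall x, A x -> x <= k * M) -> forall x, A x -> x <= 0.
Proof.
move=> A0 Aub k1 contr.
have supA : sup A <= k * sup A by apply: ge_sup => // x; exact: contr (ub_le_sup Aub) x.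
have sup_le0 : sup A <= 0 by nra.
by move=> x Ax; apply: le_trans sup_le0; exact: (ub_le_sup Aub).
Qed.

Section IntegralEquationUniqueness.
Context {R : realType} {n : nat} {v : 'rV[R]_n -> R -> 'rV[R]_n} {L c d : R}.
Hypothesis v_lip : forall x1 x2 t, t \in `[c, d] ->
  norm2 (v x1 t - v x2 t) <= L * norm2 (x1 - x2).
Hypothesis v_cont : forall x, {within `[c, d], continuous (v x)}.

Lemma integral_equation_unique [x : 'rV[R]_n] [t : R] [y1 y2 : R -> 'rV[R]_n] :
  t \in `[c, d] -> {within `[c, d], continuous y1} -> {within `[c, d], continuous y2} ->
  (forall r, r \in `[c, d] -> y1 r = x + vint (fun u => v (y1 u) u) t r) ->
  (forall r, r \in `[c, d] -> y2 r = x + vint (fun u => v (y2 u) u) t r) ->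
  forall r, r \in `[c, d] -> `|r - t| <= (`|L| + 1)^-1 -> y1 r = y2 r.
Proof.
move=> tcd cy1 cy2 y1E y2E; set h := (`|L| + 1)^-1.
have h0 : 0 < h by rewrite invr_gt0 ltr_wpDl.
have hL1 : (h * L) ^+ 2 < 1.
  have : `|h * L| < 1 by rewrite normrM gtr0_norm // mulrC ltr_pdivrMr ?mul1r ?ltrDl ?ltr_wpDl.
  by rewrite -real_normK ?num_real // expr2 => hL; have := normr_ge0 (h * L); nra.
pose J := [set r | r \in `[c, d] /\ `|r - t| <= h].
pose E r := y1 r - y2 r.
have E_vint r : r \in `[c, d] ->
    E r = vint (fun u => v (y1 u) u) t r - vint (fun u => v (y2 u) u) t r.
  by move=> rcd; rewrite /E y1E // y2E // opprD addrACA subrr add0r.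
have cd : c <= d by move: tcd; rewrite in_itv /= => /andP[]; exact: le_trans.
have [m _ E_max] := EVT_max cd (within_sqnorm2 (within_continuousB cy1 cy2)).
have Jt : J t by split; rewrite // subrr normr0 ltW.
have E_le0 r : J r -> sqnorm2 (E r) <= 0.
  move=> Jr; apply: (le0_contraction (A := [set sqnorm2 (E u) | u in J]) _ _ hL1); last by exists r.
  - by exists (sqnorm2 (E t)), t.
  - by exists (sqnorm2 (E m)) => _ [u [ucd _] <-]; exact: E_max.
  move=> M MA _ [u [ucd ut] <-].
  have M0 : 0 <= M.
    by apply: le_trans (MA (sqnorm2 (E t)) _); [rewrite E_vint // !vint_id subrr sqnorm20|exists t].
  rewrite E_vint //; apply: le_trans (sqnorm2_vint_lip_le v_lip v_cont (seg_sub tcd ucd) cy1 cy2 _) _.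
    move=> w wtu; apply: MA; exists w => //; split; first exact: seg_sub tcd ucd w wtu.
    exact: le_trans (seg_dist wtu) ut.
  rewrite mulrA exprMn; apply: (ler_wpM2r M0); apply: ler_wpM2r; first exact: sqr_ge0.
  by rewrite -real_normK ?num_real // ler_pXn2r ?nnegrE ?(ltW h0).
move=> r rcd rt; apply/eqP; rewrite -subr_eq0 -sqnorm2_le0; exact: E_le0.
Qed.

End IntegralEquationUniqueness.

Theorem theorem1 (R : realType) (n : nat)
  (v : 'rV[R]_n -> R -> 'rV[R]_n) (L : R)
  (flow : 'rV[R]_n -> R -> R -> 'rV[R]_n) :
  (* v is L-Lipschitz in its first argument (Euclidean norm) *)
  (forall (x1 x2 : 'rV[R]_n) (t : R), t \in `[0, 1] ->
     norm2 (v x1 t - v x2 t) <= L * norm2 (x1 - x2)) ->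
  (* regularity of v in time *)
  (forall x : 'rV[R]_n, {within `[0, 1], continuous (v x)}) ->
  (* flow x t is the solution r |-> x_r of dx/dr = v(x, r) with x_t = x *)
  (forall (x : 'rV[R]_n) (t : R), t \in `[0, 1] ->
     [/\ flow x t t = x,
         {within `[0, 1], continuous (flow x t)} &
         forall r : R, r \in `]0, 1[ -> is_derive r 1 (flow x t) (v (flow x t r) r)]) ->
  forall t : R, t \in `[0, 1] ->
  exists2 h : R, 0 < h &
    forall ftheta : 'rV[R]_n -> R -> R -> 'rV[R]_n,
      (forall (x : 'rV[R]_n) (t' : R), continuous (ftheta x t')) ->
      (* f_theta minimizes the SDEI loss with theta^- = theta held fixed *)
      (forall (x : 'rV[R]_n) (t' s : R), t' \in `[0, 1] -> s \in `[0, 1] ->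
         forall c : 'rV[R]_n,
           (sdei_risk v ftheta x t' s (ftheta x t' s) <= sdei_risk v ftheta x t' s c)%E) ->
      forall (x : 'rV[R]_n) (s : R), s \in `[0, 1] -> `|s - t| <= h ->
        ftheta x t s = secant v flow x t s.
Proof.
move=> v_lip v_cont flowP t t01.
exists (`|L| + 1)^-1 => [|f f_cont f_min x s s01 st]; first by rewrite invr_gt0 ltr_wpDl.
have [flow_t flow_cont flow_der] := flowP x t t01.
pose y r := x + (r - t) *: f x t r.
have y_cont : {within `[0, 1], continuous y}.
  apply: continuous_subspaceT => r; apply: cvgD; first exact: cvg_cst.
  by apply: cvgZ; [apply: cvgB; [exact: cvg_id|exact: cvg_cst]|exact: f_cont].
have vy_cont := continuous_within_lipschitz_comp v_lip v_cont y_cont.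
have vflow_cont := continuous_within_lipschitz_comp v_lip v_cont flow_cont.
have f_vmean r : r \in `[0, 1] -> f x t r = vmean (fun u => v (y u) u) t r.
  move=> r01; apply: argmin_unif_mean (f_min x t r t01 r01).
  exact: continuous_subspaceW (seg_sub t01 r01) vy_cont.
have y_eq r : r \in `[0, 1] -> y r = x + vint (fun u => v (y u) u) t r.
  by move=> r01; rewrite [in LHS]/y f_vmean // scale_vmean.
have flow_eq r : r \in `[0, 1] -> flow x t r = x + vint (fun u => v (flow x t u) u) t r.
  move=> r01; rewrite -[X in _ = X + _]flow_t.
  exact: vint_derive_itv flow_cont vflow_cont flow_der t01 r01.
have y_flow := integral_equation_unique v_lip v_cont t01 y_cont flow_cont y_eq flow_eq.
have -> : secant v flow x t s = vmean (fun u => v (flow x t u) u) t s.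
  by rewrite /secant /vmean flow_t.
rewrite f_vmean //; apply: eq_vmean => u /[1!inE] tsu; congr v.
by apply: y_flow; [exact: seg_sub t01 s01 u tsu|exact: le_trans (seg_dist tsu) st].
Qed.
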